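(* For every integer $n\ge1$, \[ p(n,n-1)=\tfrac12\,n(n-1),\qquad u(n,n-1)=\tfrac12\,(n-1)(n-2). \]
   Context: $p(n,l)$ is the number of isomorphism classes of posets with $n$ elements whose longest chain has exactly $l$ elements; $u(n,l)$ is the number of those which are locally unsymmetric. Definitions: $\ell(X)$ is the cardinality of a longest chain of a poset $X$. A subset $A$ of a poset $X$ is maximally ordered in $X$ if $|\{(a,b)\in A\times A:a<b\}|$ is maximal among subsets of $X$ of cardinality $|A|$. For $\sigma\in\mathrm{Aut}(P)$, $\Sigma(\sigma)=\{a:\sigma(a)\ne a\}$. For a finite poset $Q$ and $r\ge2$: $\sigma$ is a $(Q,r)$-generator if there exist subsets $S_0,\dots,S_{r-1}\subset\Sigma(\sigma)$, each isomorphic to $Q$, which are smallest maximally ordered subsets of $\Sigma(\sigma)$ with $\sigma(S_i)=S_{(i+1)\bmod r}$, $\ell(S_i)=\ell(\Sigma(\sigma))$, $\bigcup_iS_i=\Sigma(\sigma)$; distinct $S_i,S_j$ are $(Q,r)$-symmetric subsets. Elements $a,b$ are $(Q,r,0)$-symmetric if $a=b$; $(Q,r,1)$-symmetric if there are $(Q,r)$-symmetric subsets $A,B$ with generator $\sigma$, $a\in A$, $b=\sigma^q(a)\in B$, $1\le q<r$; for $m\ge2$, $(Q,r,m)$-symmetric if not $(Q,r,j)$-symmetric for $j<m$ but there exist $c$, $j<m$ with $a$ $(Q,r,j)$-symmetric to $c$ and $c$ $(Q,r,m-j)$-symmetric to $b$; $(Q,r)$-symmetric if $(Q,r,m)$-symmetric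 for some $m\ge0$ (an equivalence relation). $P\oslash_rQ$ is the quotient poset of equivalence classes with $E\le F$ iff some $e\in E$, $f\in F$ satisfy $e\le f$. A poset $P$ is locally symmetric if $P\oslash_rQ\not\cong P$ for some finite poset $Q$ and some $r\ge2$; it is locally unsymmetric otherwise. *)

From HB Require Import structures.
From mathcomp Require Import all_boot all_order all_fingroup.
From mathcomp Require Import boolp.

Set Implicit Arguments.
Unset Strict Implicit.
Unset Printing Implicit Defensive.

Local Open Scope group_scope.

Definition is_poset (T : Type) (R : rel T) :=
  [/\ reflexive R, antisymmetric R & transitive R].

Section LocalSymmetry.
Variable T : finType.
Implicit Types (R : rel T) (A B X : {set T}).


Definition is_chain R A := [forall x in A, forall y in A, R x y || R y x].

Definition height R X :=
  \max_(A : {set T} | (A \subset X) && is_chain R A) #|A|.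

Definition sltR R x y := (x != y) && R x y.

Definition num_ordered R A := #|[set p in setX A A | sltR R p.1 p.2]|.

Definition max_ordered R X A :=
  (A \subset X) &&
  [forall B : {set T}, ((B \subset X) && (#|B| == #|A|)) ==>
                       (num_ordered R B <= num_ordered R A)].

Definition moved (s : {perm T}) := [set a | s a != a].

Definition is_aut R (s : {perm T}) := [forall x, forall y, R (s x) (s y) == R x y].

Definition iso_to_sub k (Q : rel 'I_k) R A :=
  [exists f : {ffun 'I_k -> T},
     [&& injectiveb f, (f @: setT == A) &
         [forall i, forall j, Q i j == R (f i) (f j)]]].

Definition cyc_family R (s : {perm T}) r (S : {ffun 'I_r -> {set T}}) :=
  [&& [forall i, max_ordered R (moved s) (S i)],
      [forall i, s @: S i == S (ordS i)],
      [forall i, height R (S i) == height R (moved s)] &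
      \bigcup_i S i == moved s].

Definition smallest_cyc_family R (s : {perm T}) r (S : {ffun 'I_r -> {set T}}) :=
  cyc_family R s S &&
  [forall S' : {ffun 'I_r -> {set T}},
     cyc_family R s S' ==> [forall i, forall j, #|S i| <= #|S' j|]].

Definition generator_fam k (Q : rel 'I_k) r R (s : {perm T})
    (S : {ffun 'I_r -> {set T}}) :=
  [&& is_aut R s, smallest_cyc_family R s S & [forall i, iso_to_sub Q R (S i)]].

Definition sym1 k (Q : rel 'I_k) r R : rel T := fun a b =>
  [exists s : {perm T}, exists S : {ffun 'I_r -> {set T}},
     generator_fam Q R s S &&
     [exists i, exists j,
        [&& S i != S j, a \in S i, b \in S j &
            [exists q : 'I_r, (0 < val q) && (b == (s ^+ val q) a)]]]].

(* (Q,r)-symmetry = union over m of (Q,r,m)-symmetry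
   = reflexive-transitive closure of (Q,r,1)-symmetry. *)
Definition symQr k (Q : rel 'I_k) r R : rel T := connect (sym1 Q r R).

Definition quot_classes k (Q : rel 'I_k) r R : {set {set T}} :=
  [set [set y | symQr Q r R x y] | x : T].

Definition quot_le R (E F : {set T}) := [exists e in E, exists f in F, R e f].

Definition quot_iso k (Q : rel 'I_k) r R :=
  exists f : {set T} -> T,
    [/\ {in quot_classes Q r R &, injective f},
        (forall y, exists2 E, E \in quot_classes Q r R & f E = y) &
        {in quot_classes Q r R &, forall E F, quot_le R E F = R (f E) (f F)}].

Definition locally_symmetric R :=
  exists (k : nat) (Q : rel 'I_k) (r : nat),
    [/\ is_poset Q, 2 <= r & ~ quot_iso Q r R].

Definition locally_unsymmetric R := ~ locally_symmetric R.

End LocalSymmetry.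

Definition rel_of n (E : {set 'I_n * 'I_n}) : rel 'I_n := fun x y => (x, y) \in E.

Definition iso_graph n (E1 E2 : {set 'I_n * 'I_n}) :=
  [exists s : {perm 'I_n}, [forall x, forall y, ((x, y) \in E1) == ((s x, s y) \in E2)]].

Definition posets_nl n l : {set {set 'I_n * 'I_n}} :=
  [set E | `[< is_poset (rel_of E) >] && (height (rel_of E) setT == l)].

Definition num_iso_classes n (U : {set {set 'I_n * 'I_n}}) :=
  #|[set [set E' in U | iso_graph E E'] | E in U]|.

Definition p_count n l := num_iso_classes (posets_nl n l).

Definition u_count n l :=
  num_iso_classes [set E in posets_nl n l | `[< locally_unsymmetric (rel_of E) >]].

(* A poset on n points whose longest chain has n - 1 elements is a chain of
   n - 1 elements plus one point x; ranking the chain elements by the size of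
   their down-sets shows that x lies above the chain elements of rank < i, below
   those of rank >= j and is incomparable to the j - i elements in between, for
   some 0 <= i < j <= n - 1.  The pair (i, j) is an isomorphism invariant: i and
   n - 1 - j count the elements comparable to everything that lie below, resp.
   above, every element that is not.  This gives n(n-1)/2 classes.
   If j = i + 1, exchanging x with its only incomparable element is an
   automorphism whose two moved points are (one-point, 2)-symmetric, so the
   quotient has fewer points than P and P is locally symmetric.  If j >= i + 2,
   P is rigid: an automorphism preserves down-set sizes, hence fixes every
   element comparable to its image, and two points incomparable to x then force
   it to fix x as well.  So all symmetry classes are singletons and P is locally
   unsymmetric; these posets are indexed by the (n-1)(n-2)/2 pairs
   i < j - 1 <= n - 2. *)

From mathcomp Require Import all_boot all_fingroup boolp zify.

Set Implicit Arguments.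
Unset Strict Implicit.
Unset Printing Implicit Defensive.

Lemma card_ord_range n lo hi : hi <= n -> #|[set y : 'I_n | lo <= y < hi]| = hi - lo.
Proof.
move=> le_hi_n; rewrite -[hi - lo]muln1 -sum_nat_const_nat (big_nat_widen _ _ _ _ _ le_hi_n).
by rewrite big_geq_mkord -sum1_card; apply: eq_bigl => y; rewrite inE andbC.
Qed.

Lemma card_ord_lt_pairs k : #|[set p : 'I_k * 'I_k | p.1 < p.2]| = 'C(k, 2).
Proof.
rewrite -sum1_card -bin2_sum big_mkord.
rewrite (eq_bigl (fun p : 'I_k * 'I_k => p.1 < p.2)); last by move=> p; rewrite inE.
rewrite -(pair_big_dep xpredT (fun i j : 'I_k => i < j) (fun _ _ => 1)) /=.
rewrite (exchange_big_dep xpredT) //=; apply: eq_bigr => j _; rewrite sum1_card.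
rewrite -[RHS]subn0 -(@card_ord_range _ 0 _ (ltnW (ltn_ord j))).
by apply: eq_card => i; rewrite inE.
Qed.

Lemma double_bin2 k : 2 * 'C(k, 2) = k * (k - 1).
Proof. by rewrite bin2 mul2n subn1 even_halfK //; case: k => //= k; rewrite oddM /= andNb. Qed.

Lemma subset_ltn_card (T : finType) (A B : {set T}) b :
  A \subset B -> b \in B -> b \notin A -> #|A| < #|B|.
Proof. by move=> sAB bB bNA; apply: proper_card; apply/properP; split => //; exists b. Qed.

Lemma forall_ord2 (P : pred 'I_2) : [forall i, P i] = P ord0 && P ord_max.
Proof.
apply/forallP/andP => [P_all | [P0 P1] i]; first by split.
case: i => [[|[|i]] lt_i2] //; [apply: etrans P0 | apply: etrans P1].
  by congr P; exact: val_inj.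
by congr P; exact: val_inj.
Qed.

Lemma ltn_ord_max m (u : 'I_m.+1) : (u < m) = (u != ord_max).
Proof. by rewrite -val_eqE /= ltn_neqAle -ltnS ltn_ord andbT. Qed.

Definition comparable (T : Type) (R : rel T) a b := R a b || R b a.

Lemma comparable_sym (T : Type) (R : rel T) a b : comparable R a b = comparable R b a.
Proof. exact: orbC. Qed.

Section Heights.
Variable T : finType.
Implicit Types (R : rel T) (A X : {set T}).

Lemma leq_height_card R X : height R X <= #|X|.
Proof. by apply/bigmax_leqP => A /andP[sAX _]; exact: subset_leq_card. Qed.

Lemma leq_card_height R X A : A \subset X -> is_chain R A -> #|A| <= height R X.
Proof. by move=> sAX chA; apply: (leq_bigmax_cond A); rewrite sAX chA. Qed.

Lemma height_witness R X :
  exists2 A : {set T}, (A \subset X) && is_chain R A & #|A| = height R X.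
Proof.
have [|A chA maxA] := @eq_bigmax_cond _ [pred A : {set T} | (A \subset X) && is_chain R A]
  (fun A => #|A|).
  by apply/card_gt0P; exists set0; rewrite inE sub0set; apply/forallP => a; rewrite inE.
by exists A; rewrite // /height maxA.
Qed.

Lemma is_chain1 R a : R a a -> is_chain R [set a].
Proof.
move=> Raa; apply/forall_inP => y /set1P ->; apply/forall_inP => z /set1P ->.
by rewrite Raa.
Qed.

Lemma height_set1 R a : R a a -> height R [set a] = 1.
Proof.
move=> Raa; apply/eqP; rewrite eqn_leq -{1}(cards1 a) leq_height_card.
by rewrite -{1}(cards1 a) leq_card_height ?is_chain1.
Qed.

Lemma height_incomparable2 R a b : R a a -> ~~ R a b -> ~~ R b a ->
  height R [set a; b] = 1.
Proof.
move=> Raa nRab nRba; apply/eqP; rewrite eqn_leq; apply/andP; split.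
  apply/bigmax_leqP => A /andP[sAab /forall_inP chA]; apply/card_le1_eqP => y z yA zA.
  have /forall_inP/(_ z zA) := chA y yA.
  move/subsetP: sAab => sAab.
  by case/set2P: (sAab y yA) => ->; case/set2P: (sAab z zA) => ->;
    rewrite ?(negbTE nRab) ?(negbTE nRba).
by rewrite -(cards1 a) leq_card_height ?is_chain1 // sub1set set21.
Qed.

End Heights.

Section Automorphisms.
Variables (T : finType) (R : rel T).
Hypothesis R_poset : is_poset R.
Implicit Types (s : {perm T}) (x y z : T).

Lemma is_autP s : is_aut R s -> forall y z, R (s y) (s z) = R y z.
Proof. by move=> /forallP autRs y z; apply/eqP; exact: (forallP (autRs y)). Qed.

Lemma card_down_aut s y : is_aut R s -> #|[set w | R w (s y)]| = #|[set w | R w y]|.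
Proof.
move=> /is_autP autRs; rewrite -[RHS](card_imset _ (@perm_inj _ s)); apply: eq_card => w.
rewrite inE -{1}(permKV s w) autRs; apply/idP/imsetP => [Rwy | [v Rvy ->]].
  by exists (s^-1 w)%g; rewrite ?permKV // inE.
by rewrite permK; rewrite inE in Rvy.
Qed.

Lemma down_proper y z : R y z -> y != z -> [set w | R w y] \proper [set w | R w z].
Proof.
have [Rr Ra Rt] := R_poset; move=> Ryz neq_yz; apply/properP; split.
  by apply/subsetP => w; rewrite !inE => Rwy; exact: Rt Rwy Ryz.
exists z; rewrite !inE ?Rr //; apply: contra neq_yz => Rzy.
by rewrite (Ra y z) ?Ryz.
Qed.

Lemma aut_fix_comparable s y : is_aut R s -> comparable R y (s y) -> s y = y.
Proof.
move=> autRs cmp; apply/eqP; apply/negPn/negP => moved_y.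
case/orP: cmp => [Ry | Rsy].
  rewrite eq_sym in moved_y.
  by have := proper_card (down_proper Ry moved_y); rewrite card_down_aut // ltnn.
by have := proper_card (down_proper Rsy moved_y); rewrite card_down_aut // ltnn.
Qed.

Lemma comparable_aut s y z : is_aut R s -> comparable R (s y) (s z) = comparable R y z.
Proof. by move=> /is_autP autRs; rewrite /comparable !autRs. Qed.

Lemma aut_rigid x c d :
    (forall y z, y != x -> z != x -> comparable R y z) ->
    c != d -> c != x -> d != x -> ~~ comparable R x c -> ~~ comparable R x d ->
  forall s, is_aut R s -> s = 1%g.
Proof.
move=> chain_x neq_cd neq_cx neq_dx inc_c inc_d s autRs.
have moves_x y : s y != y -> y = x \/ s y = x.
  move=> moved_y; case: (eqVneq y x) => [|yx]; [by left | right].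
  apply/eqP; apply: contraTT moved_y => syx.
  by rewrite negbK (aut_fix_comparable autRs) ?chain_x.
have fix_x : s x = x.
  apply/eqP; apply/negPn/negP => moved_x.
  pose e := (s^-1 x)%g; have se : s e = x by rewrite permKV.
  have neq_ex : e != x by apply: contraNneq moved_x => ex; rewrite -{1}ex se.
  have [d' [neq_de neq_dx' inc_d']] :
      exists d', [/\ d' != e, d' != x & ~~ comparable R x d'].
    by case: (eqVneq c e) => [ce | ?]; [exists d; rewrite -ce eq_sym | exists c].
  have fix_d' : s d' = d'.
    apply/eqP; apply/negPn/negP => /moves_x [dx | sdx]; first by rewrite dx eqxx in neq_dx'.
    by move: neq_de; rewrite -(inj_eq (@perm_inj _ s)) sdx se eqxx.
  by move: inc_d'; rewrite -se -{1}fix_d' comparable_aut // comparable_sym chain_x.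
apply/permP => y; rewrite perm1; apply/eqP/negPn/negP => moved_y.
have yx : y = x.
  by case: (moves_x y moved_y) => // syx; apply: (@perm_inj _ s); rewrite syx fix_x.
by rewrite yx fix_x eqxx in moved_y.
Qed.

Lemma incomparable_pair_same_side x c z :
    ~~ comparable R x c -> comparable R z x -> comparable R z c ->
  (R z x = R z c) * (R x z = R c z).
Proof.
have [_ _ Rt] := R_poset; rewrite /comparable => /norP[nRxc nRcx] /orP zx /orP zc.
split; apply/idP/idP => Rz; [case: zc | case: zx | case: zc | case: zx] => // Rz';
  move: nRxc nRcx; first [rewrite (Rt _ _ _ Rz' Rz) | rewrite (Rt _ _ _ Rz Rz')] => //.
Qed.

Lemma tperm_aut x c : ~~ comparable R x c ->
    (forall z, z != x -> z != c -> comparable R z x && comparable R z c) ->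
  is_aut R (tperm x c).
Proof.
have [Rr _ _] := R_poset; move=> inc_xc cmp_others.
have same_side z : z != x -> z != c -> (R z x = R z c) * (R x z = R c z).
  by move=> zx zc; have /andP[] := cmp_others z zx zc; exact: incomparable_pair_same_side.
move: (inc_xc); rewrite /comparable => /norP[nRxc nRcx].
apply/forallP => a; apply/forallP => b; apply/eqP.
case: tpermP => [->|->|/eqP ax /eqP ac]; case: tpermP => [->|->|/eqP bx /eqP bc];
  by rewrite ?Rr ?(negbTE nRxc) ?(negbTE nRcx) ?same_side.
Qed.

End Automorphisms.

Section QuotientCriteria.
Variable T : finType.
Implicit Types (R : rel T).

Lemma quot_iso_class_inj k (Q : rel 'I_k) r R :
  quot_iso Q r R -> injective (fun x => [set y | symQr Q r R x y]).
Proof.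
case=> f [_ f_onto _] x y; set cls := fun x => _ => eq_cls.
have le_T_classes : #|T| <= #|quot_classes Q r R|.
  rewrite -cardsT; apply: leq_trans (leq_imset_card f _); apply: subset_leq_card.
  by apply/subsetP => z _; have [E EQ <-] := f_onto z; exact: imset_f.
have /imset_injP cls_inj : #|quot_classes Q r R| == #|T|.
  by rewrite eqn_leq le_T_classes leq_imset_card.
exact: cls_inj.
Qed.

Lemma locally_unsymmetric_rigid (x0 : T) R :
  (forall s : {perm T}, is_aut R s -> s = 1%g) -> locally_unsymmetric R.
Proof.
move=> rigid [k [Q [r [_ _]]]]; apply.
have no_sym1 a b : ~~ sym1 Q r R a b.
  apply/existsP => [[s /existsP[S /andP[/and3P[autRs /andP[/and4P[_ _ _ cover] _] _]]]]].
  case/existsP => i /existsP[j /and4P[_ aSi _ _]].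
  have : a \in \bigcup_i S i by apply/bigcupP; exists i.
  by rewrite (eqP cover) (rigid s autRs) inE perm1 eqxx.
have class1 a : [set y | symQr Q r R a y] = [set a].
  apply/setP => y; rewrite !inE; apply/idP/eqP => [/connectP[[|z p] /=] | ->].
  - by move=> _ ->.
  - by rewrite (negbTE (no_sym1 _ _)).
  - exact: connect0.
exists (fun E : {set T} => odflt x0 [pick y in E]); split.
- by move=> E F /imsetP[a _ ->] /imsetP[b _ ->]; rewrite !class1 !pick_set1 => /= ->.
- by move=> y; exists [set y]; rewrite ?pick_set1 //; apply/imsetP; exists y; rewrite ?class1.
- move=> E F /imsetP[a _ ->] /imsetP[b _ ->]; rewrite !class1 !pick_set1 /=.
  apply/existsP/idP => [[e /andP[/set1P -> /existsP[f /andP[/set1P ->]]]] // | Rab].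
  by exists a; rewrite set11; apply/existsP; exists b; rewrite set11.
Qed.

End QuotientCriteria.

Lemma num_ordered_set1 (T : finType) (R : rel T) a : num_ordered R [set a] = 0.
Proof.
apply/eqP; rewrite cards_eq0; apply/eqP/setP => [[y z]].
by rewrite !inE /sltR /=; case: eqP => [-> | //]; case: eqP => [-> | //]; rewrite eqxx.
Qed.

Definition rel1 : rel 'I_1 := fun _ _ => true.

Lemma rel1_poset : is_poset rel1.
Proof. by split => // i j _; rewrite (ord1 i) (ord1 j). Qed.

Lemma iso_to_sub_set1 (T : finType) (R : rel T) a : R a a -> iso_to_sub rel1 R [set a].
Proof.
move=> Raa; apply/existsP; exists [ffun=> a]; apply/and3P; split.
- by apply/injectiveP => i j _; rewrite (ord1 i) (ord1 j).
- apply/eqP/setP => y; rewrite inE; apply/imsetP/eqP => [[i _ ->] | ->].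
    by rewrite ffunE.
  by exists ord0; rewrite ?ffunE.
- by apply/forallP => i; apply/forallP => j; rewrite !ffunE Raa.
Qed.

Section SwapSymmetry.
Variables (T : finType) (R : rel T) (x c : T).
Hypotheses (R_poset : is_poset R) (neq_xc : x != c).
Hypotheses (inc_xc : ~~ comparable R x c) (aut_xc : is_aut R (tperm x c)).

Let S : {ffun 'I_2 -> {set T}} := [ffun i => if i == ord0 then [set x] else [set c]].

Lemma moved_tperm : moved (tperm x c) = [set x; c].
Proof.
apply/setP => y; rewrite !inE.
case: tpermP => [->|->|/eqP yx /eqP yc]; last by rewrite (negbTE yx) (negbTE yc) eqxx.
  by rewrite eqxx eq_sym neq_xc.
by rewrite eqxx neq_xc orbT.
Qed.

Lemma swap_cyc_family : cyc_family R (tperm x c) S.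
Proof.
have [Rr _ _] := R_poset; move: (inc_xc); rewrite /comparable => /norP[nRxc nRcx].
have max_ordered1 a : a \in [set x; c] -> max_ordered R [set x; c] [set a].
  move=> a_xc; rewrite /max_ordered sub1set a_xc; apply/forallP => B.
  by apply/implyP => /andP[_]; rewrite cards1 => /cards1P[b ->]; rewrite !num_ordered_set1.
rewrite /cyc_family !forall_ord2 !ffunE /= moved_tperm !imset_set1 tpermL tpermR.
rewrite !max_ordered1 ?set21 ?set22 // !height_set1 // height_incomparable2 // !eqxx /=.
by rewrite big_ord_recl big_ord1 !ffunE.
Qed.

Lemma swap_generator : generator_fam rel1 R (tperm x c) S.
Proof.
have [Rr _ _] := R_poset; have cycS := swap_cyc_family.
apply/and3P; split => //.
  apply/andP; split => //; apply/forallP => S'; apply/implyP => /and4P[_ _ /forallP hS' _].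
  apply/forallP => i; apply/forallP => j; apply: leq_trans (leq_height_card R (S' j)).
  rewrite (eqP (hS' j)); case/and4P: cycS => _ _ /forallP/(_ i)/eqP <- _.
  by rewrite ffunE; case: ifP => _; rewrite cards1 height_set1.
by rewrite forall_ord2 !ffunE /= !iso_to_sub_set1.
Qed.

Lemma sym1_swap : sym1 rel1 2 R x c.
Proof.
apply/existsP; exists (tperm x c); apply/existsP; exists S; rewrite swap_generator /=.
apply/existsP; exists ord0; apply/existsP; exists ord_max; rewrite !ffunE /= !set11 /=.
rewrite (inj_eq set1_inj) neq_xc /=; apply/existsP; exists ord_max.
by rewrite expg1 tpermL eqxx.
Qed.

End SwapSymmetry.

Lemma locally_symmetric_swap (T : finType) (R : rel T) x c :
    is_poset R -> x != c -> ~~ comparable R x c -> is_aut R (tperm x c) ->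
  locally_symmetric R.
Proof.
move=> R_poset neq_xc inc_xc aut_xc.
have sym_xc : symQr rel1 2 R x c by apply: connect1; exact: sym1_swap.
have sym_cx : symQr rel1 2 R c x.
  by apply: connect1; apply: sym1_swap; rewrite 1?eq_sym 1?comparable_sym 1?tpermC.
exists 1, rel1, 2; split => //; first exact: rel1_poset.
move/quot_iso_class_inj => cls_inj; case/eqP: neq_xc; apply: cls_inj.
by apply/setP => y; rewrite !inE; apply/idP/idP; apply: connect_trans.
Qed.

Section Invariants.
Variable T : finType.
Implicit Types (R : rel T).

Definition total_elt R z := [forall w, comparable R z w].

Definition low_total R y := total_elt R y && [forall z, ~~ total_elt R z ==> R y z].

Definition num_low_total R := #|[set y | low_total R y]|.

Lemma num_low_total_iso R1 R2 (s : {perm T}) :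
  (forall a b, R1 a b = R2 (s a) (s b)) -> num_low_total R1 = num_low_total R2.
Proof.
move=> R12.
have forall_perm (P : pred T) : [forall z, P (s z)] = [forall z, P z].
  by apply/forallP/forallP => P_all z //; rewrite -(permKV s z); exact: P_all.
have total12 y : total_elt R2 (s y) = total_elt R1 y.
  by rewrite /total_elt -forall_perm; apply: eq_forallb => w; rewrite /comparable !R12.
have -> : num_low_total R2 = #|[set y | low_total R2 (s y)]|.
  rewrite /num_low_total -[LHS](card_preimset _ (@perm_inj _ s)).
  by apply: eq_card => y; rewrite !inE.
have low12 y : low_total R2 (s y) = low_total R1 y.
  rewrite /low_total total12 -forall_perm; congr (_ && _).
  by apply: eq_forallb => z; rewrite total12 R12.
by apply: eq_card => y; rewrite !inE; exact/esym/low12.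
Qed.

End Invariants.

(* The chain [0 < 1 < ... < m-1] together with the point [m], which lies above
   the chain elements [< i], below those [>= j] and is incomparable to the rest. *)
Definition chainpt m i j : rel 'I_m.+1 := fun u v =>
  if (u < m) && (v < m) then u <= v
  else if u < m then u < i
  else if v < m then j <= v
  else true.
Arguments chainpt : clear implicits.

Definition chainpt_graph m i j : {set 'I_m.+1 * 'I_m.+1} := [set p | chainpt m i j p.1 p.2].

Lemma rel_of_chainpt_graph m i j : rel_of (chainpt_graph m i j) = chainpt m i j.
Proof. by apply: funext => u; apply: funext => v; rewrite /rel_of inE. Qed.

Local Ltac case_top m u := have := ltn_ord u; case: (ltnP u m) => /=.

Lemma chainpt_poset m i j : i <= j -> is_poset (chainpt m i j).
Proof.
move=> le_ij; split.
- by move=> u; rewrite /chainpt; case_top m u; lia.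
- move=> u v; rewrite /chainpt => uv; apply/val_inj/eqP; move: uv.
  by case_top m u; case_top m v; lia.
- by move=> v u w; rewrite /chainpt; case_top m u; case_top m v; case_top m w; lia.
Qed.

Section ChainPoint.
Variables (m i j : nat).
Hypotheses (lt_ij : i < j) (le_jm : j <= m).

Let lt_im : i < m. Proof. lia. Qed.

Let val_inord_i : nat_of_ord (inord i : 'I_m.+1) = i.
Proof. by rewrite inordK //; lia. Qed.

Lemma chainpt_height : height (chainpt m i j) setT = m.
Proof.
apply/eqP; rewrite eqn_leq; apply/andP; split.
  apply/bigmax_leqP => A /andP[_ /forall_inP chA]; rewrite leqNgt; apply/negP => gt_A_m.
  have A_full : A = setT.
    by apply/eqP; rewrite eqEcard subsetT cardsT card_ord.
  have := chA ord_max; rewrite A_full inE => /(_ isT) /forall_inP /(_ (inord i)).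
  rewrite inE => /(_ isT).
  by rewrite /chainpt /= val_inord_i ltnn lt_im /=; lia.
rewrite -[m in m <= _]subn0 -(@card_ord_range m.+1 0 m) // leq_card_height ?subsetT //.
apply/forall_inP => u; rewrite inE => /andP[_ um].
apply/forall_inP => v; rewrite inE => /andP[_ vm].
by rewrite /comparable /chainpt um vm leq_total.
Qed.

Lemma chainpt_total z : total_elt (chainpt m i j) z = (z < i) || (j <= z < m).
Proof.
apply/forallP/idP => [z_total | z_total w].
  case: (ltnP z m) => zm.
    by move: (z_total ord_max); rewrite /comparable /chainpt /= zm ltnn /=; lia.
  move: (z_total (inord i)); rewrite /comparable /chainpt val_inord_i lt_im.
  by case_top m z; lia.
by rewrite /comparable /chainpt; move: z_total; case_top m z; case_top m w; lia.
Qed.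

Lemma chainpt_low_total y : low_total (chainpt m i j) y = (y < i).
Proof.
rewrite /low_total chainpt_total; apply/idP/idP => [/andP[y_total /forallP y_low] | lt_yi].
  move: (y_low (inord i)); rewrite chainpt_total val_inord_i /chainpt val_inord_i lt_im.
  by move: y_total; case_top m y; lia.
apply/andP; split; first lia.
apply/forallP => z; rewrite chainpt_total /chainpt; move: lt_yi.
by case_top m y; case_top m z; lia.
Qed.

Lemma chainpt_high_total y :
  low_total (fun u v => chainpt m i j v u) y = (j <= y < m).
Proof.
have total_flip z : total_elt (fun u v => chainpt m i j v u) z = total_elt (chainpt m i j) z.
  by apply: eq_forallb => w; rewrite /comparable orbC.
rewrite /low_total total_flip chainpt_total.
apply/idP/idP => [/andP[y_total /forallP y_high] | /andP[le_jy lt_ym]].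
  move: (y_high (inord i)).
  rewrite total_flip chainpt_total val_inord_i /chainpt val_inord_i lt_im.
  by move: y_total; case_top m y; lia.
apply/andP; split; first lia.
apply/forallP => z; rewrite total_flip chainpt_total /chainpt; move: le_jy lt_ym.
by case_top m y; case_top m z; lia.
Qed.

Lemma num_low_total_chainpt : num_low_total (chainpt m i j) = i.
Proof.
rewrite /num_low_total -[RHS]subn0 -(@card_ord_range m.+1 0 i); last lia.
by apply: eq_card => y; rewrite !inE chainpt_low_total.
Qed.

Lemma num_high_total_chainpt : num_low_total (fun u v => chainpt m i j v u) = m - j.
Proof.
rewrite /num_low_total -(@card_ord_range m.+1 j m) //.
by apply: eq_card => y; rewrite !inE chainpt_high_total.
Qed.

End ChainPoint.

Lemma chainpt_graph_iso_inj m i j i' j' : i < j <= m -> i' < j' <= m ->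
  iso_graph (chainpt_graph m i j) (chainpt_graph m i' j') -> i = i' /\ j = j'.
Proof.
move=> /andP[lt_ij le_jm] /andP[lt_ij' le_jm'] /existsP[s /forallP iso_s].
have chainpt_s a b : chainpt m i j a b = chainpt m i' j' (s a) (s b).
  by have /forallP/(_ b)/eqP := iso_s a; rewrite !inE.
have := num_low_total_iso chainpt_s; rewrite !num_low_total_chainpt // => <-.
have := @num_low_total_iso _ (fun u v => chainpt m i j v u) (fun u v => chainpt m i' j' v u) s
  (fun a b => chainpt_s b a).
by rewrite !num_high_total_chainpt //; lia.
Qed.

Lemma chain_plus_point_of_height (T : finType) (R : rel T) m :
    #|T| = m.+1 -> height R setT = m ->
  exists x, (forall y z, y != x -> z != x -> comparable R y z) /\
            exists c, ~~ comparable R x c.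
Proof.
move=> card_T height_m.
have [A /andP[_ /forall_inP chA] card_A] := height_witness R setT.
have /cards1P[x compA_x] : #|~: A| == 1.
  by have := cardsC A; rewrite card_A height_m card_T; lia.
have inA y : (y \in A) = (y != x).
  apply/idP/idP => [yA | yx].
    by apply: contraTneq yA => ->; rewrite -in_setC compA_x set11.
  by apply: contraR yx; rewrite -in_setC compA_x => /set1P ->.
have chain_x y z : y != x -> z != x -> comparable R y z.
  by rewrite -!inA => yA zA; exact: (forall_inP (chA y yA)).
exists x; split => //; apply/existsP; apply: contraT; rewrite negb_exists => /forallP cmp_x.
have {}cmp_x c : comparable R x c by exact/negPn/cmp_x.
suff : #|T| <= height R setT by rewrite card_T height_m ltnn.
rewrite -cardsT leq_card_height //; apply/forall_inP => y _; apply/forall_inP => z _.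
case: (eqVneq y x) => [-> | yx]; first exact: cmp_x.
case: (eqVneq z x) => [-> | zx]; first by rewrite orbC; exact: cmp_x.
exact: chain_x.
Qed.

Section ChainPlusPoint.
Variables (m : nat) (R : rel 'I_m.+1) (x : 'I_m.+1).
Hypothesis R_poset : is_poset R.
Hypothesis chain_off_x : forall y z, y != x -> z != x -> comparable R y z.

Let down y := [set w | (w != x) && R w y].
Let rank y := #|down y|.-1.
Let not_above := [set w | (w != x) && ~~ R x w].

Let down_sub y z : R y z -> down y \subset down z.
Proof.
have [_ _ Rt] := R_poset.
by move=> Ryz; apply/subsetP => w; rewrite !inE => /andP[-> /Rt]; apply.
Qed.

Let mem_down y : y != x -> y \in down y.
Proof. by have [Rr _ _] := R_poset; rewrite inE Rr andbT. Qed.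

Let down_gt0 y : y != x -> 0 < #|down y|.
Proof. by move=> yx; apply/card_gt0P; exists y; exact: mem_down. Qed.

Let card_avoiding_x (A : {set 'I_m.+1}) : x \notin A -> #|A| <= m.
Proof.
move=> xNA; apply: (@leq_trans #|[set~ x]|); last by rewrite cardsC1 card_ord.
by apply/subset_leq_card/subsetP => w wA; rewrite !inE; apply: contraNneq xNA => <-.
Qed.

Lemma chain_rank_le y z : y != x -> z != x -> R y z = (rank y <= rank z).
Proof.
move=> yx zx; have := down_gt0 yx; have := down_gt0 zx; rewrite /rank => dz dy.
apply/idP/idP => [Ryz | le_rank].
  by have := subset_leq_card (down_sub Ryz); lia.
apply: contraLR le_rank => nRyz.
have Rzy : R z y by case/orP: (chain_off_x yx zx) nRyz => [-> | ->].
have yNdz : y \notin down z by rewrite inE yx.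
by have := subset_ltn_card (down_sub Rzy) (mem_down yx) yNdz; lia.
Qed.

Lemma chain_rank_below y : y != x -> R y x = (rank y < #|down x|).
Proof.
have [_ _ Rt] := R_poset; move=> yx; have := down_gt0 yx; rewrite /rank => dy.
apply/idP/idP => [Ryx | lt_rank].
  by have := subset_leq_card (down_sub Ryx); lia.
apply: contraLR lt_rank => nRyx.
have sub_dx : down x \subset down y.
  apply/subsetP => w; rewrite !inE => /andP[wx Rwx]; rewrite wx /=.
  by case/orP: (chain_off_x wx yx) => // Ryw; rewrite (Rt _ _ _ Ryw Rwx) in nRyx.
have yNdx : y \notin down x by rewrite inE yx.
by have := subset_ltn_card sub_dx (mem_down yx) yNdx; lia.
Qed.

Lemma chain_rank_above z : z != x -> R x z = (#|not_above| <= rank z).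
Proof.
have [_ _ Rt] := R_poset; move=> zx; have := down_gt0 zx; rewrite /rank => dz.
apply/idP/idP => [Rxz | le_rank].
  have sub_na : not_above \subset down z.
    apply/subsetP => w; rewrite !inE => /andP[wx nRxw]; rewrite wx /=.
    by case/orP: (chain_off_x wx zx) => // Rzw; rewrite (Rt _ _ _ Rxz Rzw) in nRxw.
  have zNna : z \notin not_above by rewrite inE Rxz andbF.
  by have := subset_ltn_card sub_na (mem_down zx) zNna; lia.
apply: contraLR le_rank => nRxz.
have sub_dz : down z \subset not_above.
  apply/subsetP => w; rewrite !inE => /andP[-> Rwz] /=.
  by apply: contra nRxz => Rxw; exact: Rt Rxw Rwz.
by have := subset_leq_card sub_dz; lia.
Qed.

Lemma down_x_lt_not_above c : ~~ comparable R x c -> #|down x| < #|not_above|.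
Proof.
have [Rr Ra _] := R_poset; rewrite /comparable => /norP[nRxc nRcx].
have cx : c != x by apply: contraNneq nRxc => ->; exact: Rr.
apply: (@subset_ltn_card _ _ _ c); last by rewrite inE cx.
  apply/subsetP => w; rewrite !inE => /andP[wx Rwx]; rewrite wx /=.
  by apply: contra wx => Rxw; rewrite (Ra w x) ?Rwx.
by rewrite inE cx.
Qed.

Lemma not_above_le_m : #|not_above| <= m.
Proof. by apply: card_avoiding_x; rewrite inE eqxx. Qed.

Lemma chain_rank_lt_m y : y != x -> rank y < m.
Proof.
move=> yx; have := down_gt0 yx; have : #|down y| <= m.
  by apply: card_avoiding_x; rewrite inE eqxx.
rewrite /rank; lia.
Qed.

Lemma chain_plus_point_iso :
  exists s : {perm 'I_m.+1},
    forall y z, R y z = chainpt m #|down x| #|not_above| (s y) (s z).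
Proof.
have [Rr Ra _] := R_poset.
pose phi y : 'I_m.+1 := inord (if y == x then m else rank y).
have val_phi y : nat_of_ord (phi y) = if y == x then m else rank y.
  rewrite inordK //; case: eqP => // /eqP yx.
  by rewrite ltnS ltnW ?chain_rank_lt_m.
have phi_inj : injective phi.
  move=> y z /(congr1 (@nat_of_ord _)); rewrite !val_phi.
  case: (eqVneq y x) => [->|yx]; case: (eqVneq z x) => [->|zx] //.
  - by have := chain_rank_lt_m zx; lia.
  - by have := chain_rank_lt_m yx; lia.
  by move=> eq_rank; apply: Ra; rewrite !chain_rank_le // eq_rank leqnn.
exists (perm phi_inj) => y z; rewrite !permE /chainpt !val_phi.
case: (eqVneq y x) => [->|yx]; case: (eqVneq z x) => [->|zx];
  rewrite ?ltnn ?chain_rank_lt_m //=.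
- by rewrite Rr.
- by rewrite chain_rank_above.
- by rewrite chain_rank_below.
- by rewrite chain_rank_le.
Qed.

End ChainPlusPoint.

Lemma chainpt_normal_form m (R : rel 'I_m.+1) :
    is_poset R -> height R setT = m ->
  exists a j (s : {perm 'I_m.+1}),
    [/\ a < j, j <= m & forall y z, R y z = chainpt m a j (s y) (s z)].
Proof.
move=> R_poset height_m.
have [x [chain_x [c inc_xc]]] := chain_plus_point_of_height (card_ord m.+1) height_m.
have [s iso_s] := chain_plus_point_iso R_poset chain_x.
do 2 eexists; exists s; split; last exact: iso_s.
  exact: down_x_lt_not_above inc_xc.
exact: not_above_le_m.
Qed.

Lemma is_poset_perm (T : finType) (R R' : rel T) (s : {perm T}) :
  is_poset R' -> (forall y z, R y z = R' (s y) (s z)) -> is_poset R.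
Proof.
move=> [Rr Ra Rt] RR'; split.
- by move=> y; rewrite RR' Rr.
- by move=> y z; rewrite !RR' => /Ra /perm_inj.
- by move=> y x z; rewrite !RR'; exact: Rt.
Qed.

Section ChainptSymmetry.
Variables (m a j : nat) (R : rel 'I_m.+1) (s : {perm 'I_m.+1}).
Hypotheses (lt_aj : a < j) (le_jm : j <= m).
Hypothesis R_chainpt : forall y z, R y z = chainpt m a j (s y) (s z).

Let R_poset : is_poset R.
Proof. exact: is_poset_perm (chainpt_poset m (ltnW lt_aj)) R_chainpt. Qed.

Let top := (s^-1 ord_max)%g.
Let pt k := (s^-1 (inord k : 'I_m.+1))%g.

Let val_inord k : k < m -> nat_of_ord (inord k : 'I_m.+1) = k.
Proof. by move=> lt_km; rewrite inordK // ltnW. Qed.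

Let comparable_inv u v :
  comparable R (s^-1 u)%g (s^-1 v)%g = comparable (chainpt m a j) u v.
Proof. by rewrite /comparable !R_chainpt !permKV. Qed.

Let neq_inv u v : ((s^-1 u)%g != (s^-1 v)%g) = (u != v).
Proof. by rewrite (inj_eq (@perm_inj _ _)). Qed.

Let chain_off_top y z : y != top -> z != top -> comparable R y z.
Proof.
rewrite -(permK s y) -(permK s z) !neq_inv comparable_inv -!ltn_ord_max => ym zm.
by rewrite /comparable /chainpt ym zm /= leq_total.
Qed.

Let top_incomparable k : a <= k < j -> ~~ comparable R top (pt k).
Proof.
move=> /andP[le_ak lt_kj]; have lt_km : k < m by lia.
by rewrite comparable_inv /comparable /chainpt /= val_inord // ltnn lt_km /=; lia.
Qed.

Let pt_neq_top k : k < m -> pt k != top.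
Proof. by move=> lt_km; rewrite neq_inv -ltn_ord_max val_inord. Qed.

Lemma chainpt_locally_unsymmetric : a.+1 < j -> locally_unsymmetric R.
Proof.
move=> lt_a1j; apply: (locally_unsymmetric_rigid ord0).
apply: (aut_rigid R_poset chain_off_top (c := pt a) (d := pt a.+1)).
- by rewrite neq_inv -val_eqE /= !val_inord //; lia.
- by apply: pt_neq_top; lia.
- by apply: pt_neq_top; lia.
- by apply: top_incomparable; lia.
- by apply: top_incomparable; lia.
Qed.

Lemma chainpt_locally_symmetric : j = a.+1 -> locally_symmetric R.
Proof.
move=> j_a1; have lt_am : a < m by lia.
have inc_top : ~~ comparable R top (pt a) by apply: top_incomparable; lia.
apply: (locally_symmetric_swap R_poset _ inc_top); first by rewrite eq_sym pt_neq_top.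
apply: (tperm_aut R_poset inc_top) => z.
rewrite -(permK s z) !neq_inv !comparable_inv -ltn_ord_max -val_eqE /= val_inord //.
move=> lt_zm neq_za.
by rewrite /comparable /chainpt /= lt_zm val_inord // ltnn lt_am /= leq_total; lia.
Qed.

End ChainptSymmetry.

Section IsoClasses.
Variable n : nat.
Implicit Types E : {set 'I_n * 'I_n}.

Lemma iso_graph_refl E : iso_graph E E.
Proof. by apply/existsP; exists 1%g; apply/forallP => a; apply/forallP => b; rewrite !perm1. Qed.

Lemma iso_graph_sym E1 E2 : iso_graph E1 E2 -> iso_graph E2 E1.
Proof.
case/existsP => s /forallP iso_s; apply/existsP; exists (s^-1)%g.
apply/forallP => a; apply/forallP => b.
by have /forallP/(_ (s^-1 b)%g) := iso_s (s^-1 a)%g; rewrite !permKV eq_sym.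
Qed.

Lemma iso_graph_trans E1 E2 E3 : iso_graph E1 E2 -> iso_graph E2 E3 -> iso_graph E1 E3.
Proof.
case/existsP => s /forallP iso_s /existsP[t /forallP iso_t].
apply/existsP; exists (s * t)%g; apply/forallP => a; apply/forallP => b.
have /forallP/(_ b)/eqP -> := iso_s a.
by have /forallP/(_ (s b))/eqP -> := iso_t (s a); rewrite !permM.
Qed.

Lemma num_iso_classes_transversal (U : {set {set 'I_n * 'I_n}}) (D : finType)
    (Ds : {set D}) (g : D -> {set 'I_n * 'I_n}) :
    {in Ds, forall d, g d \in U} ->
    (forall E, E \in U -> exists2 d, d \in Ds & iso_graph E (g d)) ->
    {in Ds &, forall d d', iso_graph (g d) (g d') -> d = d'} ->
  num_iso_classes U = #|Ds|.
Proof.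
move=> gU g_onto g_inj; rewrite /num_iso_classes.
pose cls E := [set E' in U | iso_graph E E'].
have cls_iso E E' : iso_graph E E' -> cls E = cls E'.
  move=> iso_EE'; apply/setP => F; rewrite !inE; apply/andb_id2l => _.
  apply/idP/idP; first exact: iso_graph_trans (iso_graph_sym iso_EE').
  exact: iso_graph_trans iso_EE'.
have -> : [set cls E | E in U] = [set cls (g d) | d in Ds].
  apply/setP => X; apply/imsetP/imsetP => [[E EU ->] | [d dDs ->]].
    by have [d dDs iso_Ed] := g_onto E EU; exists d => //; exact: cls_iso.
  by exists (g d) => //; exact: gU.
apply: card_in_imset => d d' dDs d'Ds eq_cls; apply: g_inj => //.
have : g d' \in cls (g d') by rewrite inE gU // iso_graph_refl.
by rewrite -eq_cls inE => /andP[].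
Qed.

End IsoClasses.

Lemma iso_graph_perm n (E1 E2 : {set 'I_n * 'I_n}) (s : {perm 'I_n}) :
  (forall y z, rel_of E1 y z = rel_of E2 (s y) (s z)) -> iso_graph E1 E2.
Proof.
move=> iso_s; apply/existsP; exists s.
by apply/forallP => y; apply/forallP => z; exact/eqP/iso_s.
Qed.

Lemma chainpt_graph_posets m i j : i < j <= m -> chainpt_graph m i j \in posets_nl m.+1 m.
Proof.
move=> /andP[lt_ij le_jm]; rewrite inE rel_of_chainpt_graph chainpt_height // eqxx andbT.
by apply/asboolP; apply: chainpt_poset; exact: ltnW.
Qed.

Lemma posets_nl_normal_form m E : E \in posets_nl m.+1 m ->
  exists a j (s : {perm 'I_m.+1}),
    [/\ a < j, j <= m & forall y z, rel_of E y z = chainpt m a j (s y) (s z)].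
Proof. by rewrite inE => /andP[/asboolP E_poset /eqP height_m]; exact: chainpt_normal_form. Qed.

Lemma p_count_height_pred m : p_count m.+1 m = 'C(m.+1, 2).
Proof.
rewrite /p_count -card_ord_lt_pairs; apply: (num_iso_classes_transversal
  (g := fun p : 'I_m.+1 * 'I_m.+1 => chainpt_graph m p.1 p.2)).
- move=> [i j]; rewrite inE /= => lt_ij; apply: chainpt_graph_posets.
  by rewrite lt_ij -ltnS ltn_ord.
- move=> E /posets_nl_normal_form [a [j [s [lt_aj le_jm iso_s]]]].
  exists (inord a, inord j); first by rewrite inE /= !inordK //; lia.
  by apply: (iso_graph_perm (s := s)) => y z; rewrite rel_of_chainpt_graph /= !inordK //; lia.
- move=> [i j] [i' j']; rewrite !inE /= => lt_ij lt_ij'.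
  case/chainpt_graph_iso_inj.
  - by rewrite lt_ij -ltnS ltn_ord.
  - by rewrite lt_ij' -ltnS ltn_ord.
  by move=> /val_inj -> /val_inj ->.
Qed.

Lemma u_count_height_pred m : u_count m.+1 m = 'C(m, 2).
Proof.
rewrite /u_count -card_ord_lt_pairs; apply: (num_iso_classes_transversal
  (g := fun p : 'I_m * 'I_m => chainpt_graph m p.1 p.2.+1)).
- move=> [i j]; rewrite inE /= => lt_ij; rewrite inE; apply/andP; split.
    by apply: chainpt_graph_posets; rewrite ltnS (ltnW lt_ij) ltn_ord.
  apply/asboolP; apply: (@chainpt_locally_unsymmetric m i j.+1 _ 1%g) => //.
  + by rewrite ltnS ltnW.
  + by move=> y z; rewrite !perm1 rel_of_chainpt_graph.
- move=> E; rewrite inE => /andP[/posets_nl_normal_form[a [j [s [lt_aj le_jm iso_s]]]]].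
  move/asboolP => unsym_E.
  have lt_a1j : a.+1 < j.
    rewrite ltn_neqAle lt_aj andbT; apply/eqP => j_a1.
    exact: unsym_E (chainpt_locally_symmetric lt_aj le_jm iso_s (esym j_a1)).
  have lt_am : a < m by lia.
  have lt_j1m : j.-1 < m by lia.
  exists (Ordinal lt_am, Ordinal lt_j1m); first by rewrite inE /=; lia.
  by apply: (iso_graph_perm (s := s)) => y z; rewrite rel_of_chainpt_graph /= prednK //; lia.
- move=> [i j] [i' j']; rewrite !inE /= => lt_ij lt_ij'.
  case/chainpt_graph_iso_inj.
  - by rewrite ltnS (ltnW lt_ij) ltn_ord.
  - by rewrite ltnS (ltnW lt_ij') ltn_ord.
  by move=> /val_inj -> [/val_inj ->].
Qed.

Theorem mainTheorem13 (n : nat) : 1 <= n ->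
  2 * p_count n (n - 1) = n * (n - 1) /\
  2 * u_count n (n - 1) = (n - 1) * (n - 2).
Proof.
case: n => [|m] // _; rewrite !subSS subn0 p_count_height_pred u_count_height_pred.
by rewrite !double_bin2 subSS subn0.
Qed.
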